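(* Let $G=(V,E)$ be a finite graph, and let $W,\widehat W$ be maps assigning nonnegative weights to connected subgraphs of $G$, such that for every connected subgraph $C$: $\widehat W(C)=0$ if $W(C)=0$, and $0<\widehat W(C)<W(C)$ if $W(C)>0$. Put $W_{\rm red}=\widehat W$, $W_{\rm blue}=W-\widehat W$, and let $\mu_{G,\mathbf W}$ be the joint measure on pairs $(A,\boldsymbol\sigma)$, $A\subseteq E$, $\boldsymbol\sigma\in\{\mathrm{red},\mathrm{blue}\}^V$, $$\mu_{G,\mathbf W}(A,\boldsymbol\sigma)\propto\Delta(A,\boldsymbol\sigma)\prod_{C\in K(A)}W_{\sigma(C)}(C).$$ Suppose that for each $\boldsymbol\sigma$ with $(A,\boldsymbol\sigma)\in\mathrm{supp}(\mu_{G,\mathbf W})$ for some $A$, $P_{G_{\rm red}(\boldsymbol\sigma),\widehat W}$ is a transition matrix on $\{A_{\rm red}\subseteq E(G_{\rm red}(\boldsymbol\sigma))\}$ with stationary distribution $\phi_{G_{\rm red}(\boldsymbol\sigma),\widehat W}$, and that $P_{G,\widehat W}$ (the case where all vertices are red) is ergodic on $\mathrm{supp}(\phi_{G,\widehat W})$. Define transition matrices on $\mathrm{supp}(\mu_{G,\mathbf W})$ by $$P_{\rm colour}[(A,\boldsymbol\sigma)\to(A',\boldsymbol\sigma')]=\delta_{A,A'}\,\Delta(A,\boldsymbol\sigma')\prod_{C\in K(A)}\frac{W_{\sigma'(C)}(C)}{W(C)},$$ $$P_{\rm bond}[(A,\boldsymbol\sigma)\to(A',\boldsymbol\sigma')]=\delta_{\boldsymbol\sigma,\boldsymbol\sigma'}\,\Delta(A',\boldsymbol\sigma)\,\delta_{A_{\rm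 blue},A'_{\rm blue}}\,P_{G_{\rm red}(\boldsymbol\sigma),\widehat W}[A_{\rm red}\to A'_{\rm red}].$$ Then $P:=P_{\rm colour}P_{\rm bond}$ is ergodic on $\mathrm{supp}(\mu_{G,\mathbf W})$ and has stationary distribution $\mu_{G,\mathbf W}$. (Consequently, since the marginal of $\mu_{G,\mathbf W}$ on $A$ is $\phi_{G,W}$, the $A$-component of this chain samples $\phi_{G,W}$.)
   Context: For a graph $H$ (a subgraph of $G$) and $A\subseteq E(H)$, $K(A)$ denotes the set of connected components of the spanning subgraph $(V(H),A)$, and $\phi_{H,W}(A)\propto\prod_{C\in K(A)}W(C)$ for $A\subseteq E(H)$. For $\boldsymbol\sigma\in\{\mathrm{red},\mathrm{blue}\}^V$, $\Delta(A,\boldsymbol\sigma)$ is the indicator that $\sigma_i=\sigma_j$ for every edge $ij\in A$; when $\Delta(A,\boldsymbol\sigma)=1$, $\sigma(C)$ denotes the common colour of the vertices of the component $C$. $G_{\rm red}(\boldsymbol\sigma)$ and $G_{\rm blue}(\boldsymbol\sigma)$ are the subgraphs of $G$ induced by the red and blue vertices respectively, $A_{\rm red}=A\cap E(G_{\rm red}(\boldsymbol\sigma))$ and $A_{\rm blue}=A\cap E(G_{\rm blue}(\boldsymbol\sigma))$. $\mathrm{supp}$ denotes the set of states of positive probability. ''Ergodic'' means irreducible. *)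

From HB Require Import structures.
From mathcomp Require Import all_boot all_order all_algebra.
Set Implicit Arguments. Unset Strict Implicit. Unset Printing Implicit Defensive.
Import Order.TTheory GRing.Theory Num.Theory.
Local Open Scope ring_scope.

Section Graph.
Variables (V Ed : finType) (ends : Ed -> V * V).

Definition Eind (U : {set V}) : {set Ed} :=
  [set e | ((ends e).1 \in U) && ((ends e).2 \in U)].

Definition adj (A : {set Ed}) : rel V :=
  fun x y => [exists e in A, (ends e == (x, y)) || (ends e == (y, x))].

Definition compo (A : {set Ed}) (v : V) : {set V} * {set Ed} :=
  let S := [set y | connect (adj A) v y] in
  (S, [set e in A | ((ends e).1 \in S) && ((ends e).2 \in S)]).

(* K(A) for H = G[U], A a subset of E(G[U]) *)
Definition comps (U : {set V}) (A : {set Ed}) : {set {set V} * {set Ed}} :=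
  [set compo A v | v in U].

Definition conn_sub (S : {set V}) (B : {set Ed}) : Prop :=
  S != set0 /\ B \subset Eind S /\
  forall x y, x \in S -> y \in S -> connect (adj B) x y.

Definition phiw (R : realFieldType) (U : {set V})
  (W : {set V} -> {set Ed} -> R) (A : {set Ed}) : R :=
  \prod_(C in comps U A) W C.1 C.2.
Definition phi (R : realFieldType) (U : {set V})
  (W : {set V} -> {set Ed} -> R) (A : {set Ed}) : R :=
  phiw U W A / \sum_(B : {set Ed} | B \subset Eind U) phiw U W B.

(* colours: true = red, false = blue *)
Definition Delta (A : {set Ed}) (s : {ffun V -> bool}) : bool :=
  [forall e in A, s (ends e).1 == s (ends e).2].
Definition colour_of (s : {ffun V -> bool}) (C : {set V} * {set Ed}) : bool :=
  if [pick x in C.1] is Some x then s x else true.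
Definition reds (s : {ffun V -> bool}) : {set V} := [set v | s v].
Definition blues (s : {ffun V -> bool}) : {set V} := [set v | ~~ s v].

Definition Wcol (R : realFieldType) (W Wh : {set V} -> {set Ed} -> R)
  (c : bool) : {set V} -> {set Ed} -> R :=
  if c then Wh else (fun S B => W S B - Wh S B).

Definition state := ({set Ed} * {ffun V -> bool})%type.

Definition muw (R : realFieldType) (W Wh : {set V} -> {set Ed} -> R)
  (x : state) : R :=
  (Delta x.1 x.2)%:R *
  \prod_(C in comps setT x.1) Wcol W Wh (colour_of x.2 C) C.1 C.2.
Definition mu (R : realFieldType) (W Wh : {set V} -> {set Ed} -> R)
  (x : state) : R :=
  muw W Wh x / \sum_(y : state) muw W Wh y.

Definition Pcolour (R : realFieldType) (W Wh : {set V} -> {set Ed} -> R)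
  (x y : state) : R :=
  (x.1 == y.1)%:R * (Delta x.1 y.2)%:R *
  \prod_(C in comps setT x.1)
     (Wcol W Wh (colour_of y.2 C) C.1 C.2 / W C.1 C.2).

(* Pred U a a' = P_{G[U],Wh}[a -> a'] *)
Definition Pbond (R : realFieldType)
  (Pred : {set V} -> {set Ed} -> {set Ed} -> R) (x y : state) : R :=
  let s := x.2 in
  let Er := Eind (reds s) in let Eb := Eind (blues s) in
  (s == y.2)%:R * (Delta y.1 s)%:R * ((x.1 :&: Eb) == (y.1 :&: Eb))%:R *
  Pred (reds s) (x.1 :&: Er) (y.1 :&: Er).

Definition Pchain (R : realFieldType) (W Wh : {set V} -> {set Ed} -> R)
  (Pred : {set V} -> {set Ed} -> {set Ed} -> R) (x y : state) : R :=
  \sum_(z : state) Pcolour W Wh x z * Pbond Pred z y.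

End Graph.

(* Irreducibility ("ergodic") of a matrix P on the set of states [supp]. *)
Definition irreducible_on (R : realFieldType) (T : finType)
  (supp : pred T) (P : T -> T -> R) : Prop :=
  forall x y, supp x -> supp y ->
    connect [rel a b | [&& supp a, supp b & 0 < P a b]] x y.

Definition stochastic_on (R : realFieldType) (T : finType)
  (dom : pred T) (P : T -> T -> R) : Prop :=
  (forall a b, dom a -> dom b -> 0 <= P a b) /\
  (forall a, dom a -> \sum_(b | dom b) P a b = 1).

Definition stationary_on (R : realFieldType) (T : finType)
  (dom : pred T) (P : T -> T -> R) (pi : T -> R) : Prop :=
  forall b, dom b -> \sum_(a | dom a) pi a * P a b = pi b.

From HB Require Import structures.
From mathcomp Require Import all_boot all_order all_algebra.
Import Order.TTheory GRing.Theory Num.Theory.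
Local Open Scope ring_scope.
Set Implicit Arguments. Unset Strict Implicit. Unset Printing Implicit Defensive.

(* Summing the joint weight over the colourings compatible with A gives
   prod_C (Wh C + (W C - Wh C)) = prod_C W C, so P_colour, which recolours every
   cluster independently with probabilities W_c(C)/W(C), fixes mu.  For a fixed
   colouring, mu factorises as phi_{G_red,Wh}(A_red) times a factor depending only
   on A_blue, so P_bond fixes mu by the stationarity of P_red.
   For irreducibility: every supported state can be recoloured all red (Wh > 0
   wherever W > 0) and then moved by P_{G,Wh}; on all-red states the chain is
   P_{G,Wh}, which is irreducible; and every supported (B,t) is reached in one step
   from the all-red state on X :|: B_blue, where X is a P_red-predecessor of B_red of
   positive phi-weight, which exists because phi is stationary. *)

Lemma connect_restrict (T : finType) (e e' : rel T) (P : pred T) x y :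
  P x -> (forall a b, P a -> e a b -> P b && e' a b) ->
  connect e x y -> P y && connect e' x y.
Proof.
move=> Px He /connectP[p ep ->]; elim: p x Px ep => [|a p IHp] x Px /=.
  by rewrite Px connect0.
case/andP=> /(He _ _ Px)/andP[Pa ea] /(IHp _ Pa)/andP[-> ca].
by rewrite (connect_trans (connect1 ea) ca).
Qed.

Lemma homo_connect (T T' : finType) (e : rel T) (e' : rel T') (f : T -> T') x y :
  {homo f : a b / e a b >-> e' a b} -> connect e x y -> connect e' (f x) (f y).
Proof.
move=> Hf /connectP[p ep ->]; elim: p x ep => [|a p IHp] x /=; first by rewrite connect0.
by case/andP=> /Hf ea /IHp; apply: connect_trans (connect1 ea).
Qed.

Lemma sum_pair (R : nmodType) (I J : finType) (F : I * J -> R) :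
  \sum_x F x = \sum_i \sum_j F (i, j).
Proof. by rewrite pair_bigA; apply: eq_bigr => -[]. Qed.

Section StationaryMeasures.
Variables (R : realFieldType) (T : finType).
Implicit Types (D : pred T) (P Q : T -> T -> R) (pi F : T -> R).

Lemma normalized_neq0 D F x : (forall y, D y -> 0 <= F y) -> D x ->
  (F x / \sum_(y | D y) F y != 0) = (F x != 0).
Proof.
move=> F_ge0 Dx; have [-> | Fx] := eqVneq (F x) 0; first by rewrite mul0r eqxx.
suff Z_gt0 : 0 < \sum_(y | D y) F y by rewrite mulf_neq0 // invr_eq0 gt_eqF.
rewrite (bigD1 x) //= ltr_wpDr ?sumr_ge0 // => [y /andP[Dy _] | ]; first exact: F_ge0.
by rewrite lt_def Fx F_ge0.
Qed.

Lemma stationary_unnormalized D P F : (forall y, D y -> 0 <= F y) ->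
  stationary_on D P (fun a => F a / \sum_(y | D y) F y) ->
  forall b, D b -> \sum_(a | D a) F a * P a b = F b.
Proof.
move=> F_ge0 stP b Db; have := stP b Db; set Z := \sum_(y | D y) F y.
have [Z0 _ | Zn] := eqVneq Z 0.
  have F0 := psumr_eq0P F_ge0 Z0.
  by rewrite F0 // big1 // => a Da; rewrite F0 // mul0r.
move=> stPb; apply: (mulIf (invr_neq0 Zn)); rewrite -stPb big_distrl.
by apply: eq_bigr => a _; rewrite mulrAC.
Qed.

Lemma stationary_scale P pi c :
  stationary_on predT P pi -> stationary_on predT P (fun a => pi a * c).
Proof.
by move=> stP b _; rewrite -(stP b) // big_distrl; apply: eq_bigr => a _; rewrite mulrAC.
Qed.

Lemma stationary_comp P Q pi : stationary_on predT P pi -> stationary_on predT Q pi ->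
  stationary_on predT (fun a b => \sum_z P a z * Q z b) pi.
Proof.
move=> stP stQ b _; rewrite -(stQ b) //; under eq_bigr do rewrite big_distrr.
rewrite exchange_big; apply: eq_bigr => z _; rewrite -(stP z) // big_distrl.
by apply: eq_bigr => a _; exact: mulrA.
Qed.

Lemma stationary_pos_succ D P pi a :
  stochastic_on D P -> stationary_on D P pi -> (forall a, D a -> 0 <= pi a) ->
  D a -> 0 < pi a -> exists2 b, D b && (0 < pi b) & 0 < P a b.
Proof.
move=> [P_ge0 P_sum1] stP pi_ge0 Da pia.
have : \sum_(b | D b) P a b != 0 by rewrite P_sum1 ?oner_neq0.
rewrite psumr_neq0 => [/hasP[b _ /andP[Db Pab]] | b Db]; last exact: P_ge0.
exists b; rewrite // Db -(stP b Db) /=; apply: lt_le_trans (mulr_gt0 pia Pab) _.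
rewrite (bigD1 a) //= lerDl sumr_ge0 // => c /andP[Dc _].
by rewrite mulr_ge0 ?pi_ge0 ?P_ge0.
Qed.

Lemma stationary_pos_pred D P pi b :
  (forall a b, D a -> D b -> 0 <= P a b) -> stationary_on D P pi ->
  (forall a, D a -> 0 <= pi a) -> D b -> 0 < pi b ->
  exists2 a, D a && (0 < pi a) & 0 < P a b.
Proof.
move=> P_ge0 stP pi_ge0 Db; rewrite -(stP b Db) lt_def psumr_neq0; last first.
  by move=> a Da; rewrite mulr_ge0 ?pi_ge0 ?P_ge0.
case/andP => /hasP[a _ /andP[Da]] + _.
rewrite lt_def mulf_eq0 negb_or => /andP[/andP[pia Pab] _].
by exists a; rewrite ?Da lt_def ?pia ?Pab ?pi_ge0 ?P_ge0.
Qed.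

End StationaryMeasures.

Section Clusters.
Variables (V Ed : finType) (ends : Ed -> V * V).
Implicit Types (A : {set Ed}) (U : {set V}).

Lemma adjP A x y :
  reflect (exists2 e, e \in A & ends e = (x, y) \/ ends e = (y, x)) (adj ends A x y).
Proof.
apply: (iffP existsP) => [[e /andP[eA eE]] | [e eA eE]]; exists e => //.
  by case/orP: eE => /eqP; [left | right].
by rewrite eA; case: eE => ->; rewrite eqxx ?orbT.
Qed.

Lemma adj_sym A : symmetric (adj ends A).
Proof. by move=> x y; apply/adjP/adjP => -[e eA /or_comm]; exists e. Qed.

Definition uncrossed A U :=
  forall e, e \in A -> ((ends e).1 \in U) = ((ends e).2 \in U).

Lemma uncrossedC A U : uncrossed A U -> uncrossed A (~: U).
Proof. by move=> AU e eA; rewrite !inE AU. Qed.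

Lemma uncrossed_connect A U v y : uncrossed A U -> v \in U ->
  connect (adj ends A) v y -> (y \in U) && connect (adj ends (A :&: Eind ends U)) v y.
Proof.
move=> AU vU; apply: connect_restrict => // a b aU /adjP[e eA he].
have eU : e \in Eind ends U.
  by have AUe := AU e eA; rewrite inE -AUe andbb; case: he AUe => -> /= => [|->].
have bU : b \in U by move: eU; rewrite inE; case: he => -> /andP[].
by apply/andP; split=> //; apply/adjP; exists e; rewrite // inE eA.
Qed.

Lemma compo_self A v : v \in (compo ends A v).1.
Proof. by rewrite inE connect0. Qed.

Lemma compoE A v :
  compo ends A v = ((compo ends A v).1, A :&: Eind ends (compo ends A v).1).
Proof. by congr pair; apply/setP => e; rewrite !inE. Qed.

Lemma compo_connect A v x : connect (adj ends A) v x -> compo ends A x = compo ends A v.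
Proof.
move=> vx; rewrite /compo.
suff -> : [set y | connect (adj ends A) x y] = [set y | connect (adj ends A) v y] by [].
by apply/setP => y; rewrite !inE (same_connect (sym_connect_sym (@adj_sym A)) vx).
Qed.

Lemma uncrossed_compo A v : uncrossed A (compo ends A v).1.
Proof.
move=> e eA; rewrite !inE; apply: same_connect_r; first exact/sym_connect_sym/adj_sym.
by apply/connect1/adjP; exists e; rewrite // -surjective_pairing; left.
Qed.

Lemma conn_sub_compo A v : conn_sub ends (compo ends A v).1 (compo ends A v).2.
Proof.
rewrite compoE /=; set S := (compo ends A v).1.
have vS : forall x, x \in S -> connect (adj ends (A :&: Eind ends S)) v x.
  move=> x; rewrite inE => /(uncrossed_connect (@uncrossed_compo A v) (compo_self A v)).
  by case/andP.
split; first by apply/set0Pn; exists v; apply: compo_self.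
split; first by apply/subsetP => e; rewrite inE => /andP[].
move=> x y /vS vx /vS vy; apply: connect_trans vy.
by rewrite (sym_connect_sym (@adj_sym _)).
Qed.

Lemma conn_sub_comps U A C : C \in comps ends U A -> conn_sub ends C.1 C.2.
Proof. by case/imsetP => v _ ->; apply: conn_sub_compo. Qed.

Lemma compo_restrict A U : uncrossed A U ->
  {in U, compo ends A =1 compo ends (A :&: Eind ends U)}.
Proof.
move=> AU v vU.
have AUv y : connect (adj ends A) v y = connect (adj ends (A :&: Eind ends U)) v y.
  apply/idP/idP => [/(uncrossed_connect AU vU)/andP[] // |].
  apply: connect_sub => a b /adjP[e /setIP[eA _] eE].
  by apply/connect1/adjP; exists e.
rewrite compoE [RHS]compoE.
have -> : (compo ends (A :&: Eind ends U) v).1 = (compo ends A v).1.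
  by apply/setP => y; rewrite !inE AUv.
set S := (compo ends A v).1; congr pair.
have SU y : connect (adj ends A) v y -> y \in U.
  by case/(uncrossed_connect AU vU)/andP.
have ESU : Eind ends S \subset Eind ends U.
  by apply/subsetP => e; rewrite !inE => /andP[/SU -> /SU ->].
by rewrite -setIA (setIidPr ESU).
Qed.

Lemma Eind_setT : Eind ends setT = setT.
Proof. by apply/setP => e; rewrite !inE. Qed.

Lemma Eind_set0 : Eind ends set0 = set0.
Proof. by apply/setP => e; rewrite !inE. Qed.

End Clusters.

Section Colourings.
Variables (V Ed : finType) (ends : Ed -> V * V).
Implicit Types (A : {set Ed}) (s : {ffun V -> bool}).

Lemma Delta_sub A A' s : A' \subset A -> Delta ends A s -> Delta ends A' s.
Proof. by move=> /subsetP AA' /forall_inP D; apply/forall_inP => e /AA' /D. Qed.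

Lemma bluesE s : blues s = ~: reds s.
Proof. by apply/setP => v; rewrite !inE. Qed.

Lemma Delta_uncrossed A s : Delta ends A s -> uncrossed ends A (reds s).
Proof. by move=> /forall_inP D e /D /eqP; rewrite !inE. Qed.

Lemma colour_compo A s v : Delta ends A s -> colour_of s (compo ends A v) = s v.
Proof.
move=> D; rewrite /colour_of; case: pickP => [x | /(_ v)]; last by rewrite compo_self.
rewrite inE; have [sv|sv] := boolP (s v).
  have vU : v \in reds s by rewrite inE.
  by case/(uncrossed_connect (Delta_uncrossed D) vU)/andP; rewrite inE.
have vU : v \in ~: reds s by rewrite !inE.
by case/(uncrossed_connect (uncrossedC (Delta_uncrossed D)) vU)/andP; rewrite !inE => /negPf.
Qed.

Lemma prod_comps_split (R : comNzRingType) (F : {set V} * {set Ed} -> R) A U :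
  uncrossed ends A U ->
  \prod_(C in comps ends setT A) F C =
  \prod_(C in comps ends U (A :&: Eind ends U)) F C *
  \prod_(C in comps ends (~: U) (A :&: Eind ends (~: U))) F C.
Proof.
move=> AU; have AUC := uncrossedC AU.
rewrite /comps -(eq_in_imset (compo_restrict AU)) -(eq_in_imset (compo_restrict AUC)).
rewrite -(setUCr U) imsetU -bigU /=; first by apply: eq_bigl => C; rewrite !inE.
rewrite -setI_eq0.
apply/eqP/setP => C; rewrite !inE; apply/negbTE/andP.
case=> /imsetP[v vU ->] /imsetP[w wU vw].
have : w \in (compo ends A v).1 by rewrite vw compo_self.
by rewrite inE => /(uncrossed_connect AU vU)/andP[wU' _]; rewrite inE wU' in wU.
Qed.

Definition all_red : {ffun V -> bool} := [ffun _ => true].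

Lemma Delta_all_red A : Delta ends A all_red.
Proof. by apply/forall_inP => e _; rewrite !ffunE. Qed.

Lemma colour_all_red (C : {set V} * {set Ed}) : colour_of all_red C = true.
Proof. by rewrite /colour_of; case: pickP => // x _; rewrite ffunE. Qed.

Lemma reds_all_red : reds all_red = setT.
Proof. by apply/setP => v; rewrite !inE ffunE. Qed.

Lemma blues_all_red : blues all_red = set0.
Proof. by apply/setP => v; rewrite !inE ffunE. Qed.

Lemma Delta_red_blue_part A s : Delta ends A s ->
  A :&: Eind ends (reds s) :|: A :&: Eind ends (blues s) = A.
Proof.
move=> /forall_inP D; apply/setP => e; rewrite !inE.
by case eA : (e \in A) => //=; move: (D e eA); case: (s _) (s _) => [] [].
Qed.

Lemma recombine_red_blue s A (X : {set Ed}) : X \subset Eind ends (reds s) ->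
  let Y := X :|: A :&: Eind ends (blues s) in
  [/\ Y :&: Eind ends (reds s) = X,
      Y :&: Eind ends (blues s) = A :&: Eind ends (blues s) & Delta ends Y s].
Proof.
move=> /subsetP XE /=; split; try apply/setP => e; try apply/forall_inP => e;
  by move: (XE e); rewrite !inE; case: (e \in X) (e \in A) (s _) (s _) => [] [] [] [] //= ->.
Qed.

Lemma sum_fixed_blue_part (R : nmodType) (F : {set Ed} -> R) s A' :
  \sum_(A : {set Ed} | Delta ends A s &&
          (A :&: Eind ends (blues s) == A' :&: Eind ends (blues s))) F A =
  \sum_(X : {set Ed} | X \subset Eind ends (reds s)) F (X :|: A' :&: Eind ends (blues s)).
Proof.
set Er := Eind ends (reds s); set Eb := Eind ends (blues s).
rewrite (reindex_onto (fun X : {set Ed} => X :|: A' :&: Eb) (fun A => A :&: Er)) /=.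
  apply: eq_bigl => X; apply/idP/idP => [/andP[_ /eqP <-] | XE]; first exact: subsetIr.
  by have [-> -> ->] := recombine_red_blue A' XE; rewrite !eqxx.
by move=> A /andP[DA /eqP <-]; apply: Delta_red_blue_part.
Qed.

End Colourings.

Section ClusterColourings.
Variables (V Ed : finType) (ends : Ed -> V * V).
Variables (R : realFieldType) (W Wh : {set V} -> {set Ed} -> R).

Definition cluster_colouring A (f : {ffun {set V} * {set Ed} -> bool}) : {ffun V -> bool} :=
  [ffun v => f (compo ends A v)].

Lemma Delta_cluster_colouring A f : Delta ends A (cluster_colouring A f).
Proof.
apply/forall_inP => e eA; rewrite !ffunE (@compo_connect _ _ _ _ (ends e).1) //.
by apply/connect1/adjP; exists e; rewrite // -surjective_pairing; left.
Qed.

Lemma colour_cluster_colouring A f C :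
  C \in comps ends setT A -> colour_of (cluster_colouring A f) C = f C.
Proof.
case/imsetP => v _ ->; rewrite /colour_of.
case: pickP => [x | /(_ v)]; last by rewrite compo_self.
by rewrite inE ffunE => /compo_connect ->.
Qed.

Lemma sum_colourings_muw A :
  \sum_s muw ends W Wh (A, s) = \prod_(C in comps ends setT A) W C.1 C.2.
Proof.
(* Colourings compatible with [A] are exactly the [cluster_colouring]s, so expanding
   [prod_C (Wcol true C + Wcol false C)] sums over them. *)
set K := comps ends setT A.
have -> : \sum_s muw ends W Wh (A, s) =
          \sum_(s | Delta ends A s) \prod_(C in K) Wcol W Wh (colour_of s C) C.1 C.2.
  rewrite [RHS]big_mkcond; apply: eq_bigr => s _.
  by rewrite /muw; case: Delta; rewrite ?mul1r ?mul0r.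
rewrite (eq_bigr (fun C => \sum_(b : bool) Wcol W Wh b C.1 C.2)); last first.
  by move=> C _; rewrite big_bool /= addrC subrK.
rewrite (big_distr_big true) /=.
rewrite (reindex_onto (cluster_colouring A)
  (fun s => [ffun C => if C \in K then colour_of s C else true])); last first.
  by move=> s D; apply/ffunP => v; rewrite !ffunE imset_f ?inE // colour_compo.
apply: eq_big => [f | f /andP[_ _]]; last first.
  by apply: eq_bigr => C CK; rewrite colour_cluster_colouring.
rewrite Delta_cluster_colouring /=; apply/eqP/pffun_onP => [<- | [supp _]].
  by split=> //; apply/subsetP => C; rewrite !inE ffunE; case: ifP; rewrite ?eqxx.
apply/ffunP => C; rewrite ffunE; case: ifP => [|CK]; first exact: colour_cluster_colouring.
by apply/esym/eqP; apply: contraFT CK => fC; apply: (subsetP supp); rewrite inE.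
Qed.

End ClusterColourings.

Section Chain.
Variables (V Ed : finType) (ends : Ed -> V * V).
Variables (R : realFieldType) (W Wh : {set V} -> {set Ed} -> R).
Implicit Types (A B : {set Ed}) (U : {set V}) (s t : {ffun V -> bool}).
Hypothesis HW : forall S B, conn_sub ends S B ->
  0 <= W S B /\ (W S B = 0 -> Wh S B = 0) /\ (0 < W S B -> 0 < Wh S B /\ Wh S B < W S B).

Lemma Wcol_ge0 c S B : conn_sub ends S B -> 0 <= Wcol W Wh c S B.
Proof.
case/HW => + [Wh0 Wh_gt0]; rewrite le0r => /orP[/eqP W0 | /Wh_gt0[Wh_pos Wh_ltW]].
  by rewrite /Wcol; case: c => /=; rewrite (Wh0 W0) ?W0 ?subrr.
by rewrite /Wcol; case: c => /=; rewrite ?subr_ge0 ltW.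
Qed.

Lemma Wcol_gt0 c S B : conn_sub ends S B -> (0 < Wcol W Wh c S B) = (0 < W S B).
Proof.
case/HW => + [Wh0 Wh_gt0]; rewrite le0r => /orP[/eqP W0 | W_gt0].
  by rewrite /Wcol; case: c => /=; rewrite (Wh0 W0) ?W0 ?subrr ltxx.
by have [? ?] := Wh_gt0 W_gt0; rewrite W_gt0 /Wcol; case: c => /=; rewrite ?subr_gt0.
Qed.

Lemma muw_ge0 x : 0 <= muw ends W Wh x.
Proof.
by rewrite mulr_ge0 ?ler0n // prodr_ge0 // => C /conn_sub_comps; apply: Wcol_ge0.
Qed.

Lemma muw_neq0P A s : muw ends W Wh (A, s) != 0 <->
  Delta ends A s /\ forall C, C \in comps ends setT A -> 0 < W C.1 C.2.
Proof.
rewrite mulf_eq0 negb_or pnatr_eq0 eqb0 negbK; split=> [/andP[D /prodf_neq0 Wc] | [D W_gt0]].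
  split=> // C CK; have cC := conn_sub_comps CK.
  by rewrite -(Wcol_gt0 (colour_of s C) cC) lt_def Wc // Wcol_ge0.
rewrite D; apply/prodf_neq0 => C CK.
by rewrite gt_eqF // Wcol_gt0 ?W_gt0 //; apply: conn_sub_comps CK.
Qed.

Lemma mu_neq0 x : (mu ends W Wh x != 0) = (muw ends W Wh x != 0).
Proof. by apply: normalized_neq0 => // y _; apply: muw_ge0. Qed.

Lemma phiw_ge0 U A : 0 <= phiw ends U Wh A.
Proof. by rewrite prodr_ge0 // => C /conn_sub_comps; apply: (Wcol_ge0 true). Qed.

Lemma phi_ge0 U A : 0 <= phi ends U Wh A.
Proof. by rewrite divr_ge0 ?phiw_ge0 ?sumr_ge0 // => B _; apply: phiw_ge0. Qed.

Lemma phi_neq0 U A : A \subset Eind ends U ->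
  (phi ends U Wh A != 0) = (phiw ends U Wh A != 0).
Proof. by apply: normalized_neq0 => B _; apply: phiw_ge0. Qed.

Lemma muw_all_red A : muw ends W Wh (A, all_red V) = phiw ends setT Wh A.
Proof.
by rewrite /muw Delta_all_red mul1r; apply: eq_bigr => C _; rewrite colour_all_red.
Qed.

Lemma muw_neq0_all_red A s : muw ends W Wh (A, s) != 0 -> muw ends W Wh (A, all_red V) != 0.
Proof. by case/muw_neq0P => _ W_gt0; apply/muw_neq0P; split=> //; apply: Delta_all_red. Qed.

Lemma muw_split A s : Delta ends A s ->
  muw ends W Wh (A, s) =
  phiw ends (reds s) Wh (A :&: Eind ends (reds s)) *
  \prod_(C in comps ends (blues s) (A :&: Eind ends (blues s))) (W C.1 C.2 - Wh C.1 C.2).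
Proof.
move=> D; rewrite /muw D mul1r (prod_comps_split _ (Delta_uncrossed D)) -bluesE.
congr (_ * _); apply: eq_bigr => C /imsetP[v + ->];
  rewrite inE colour_compo ?(Delta_sub (subsetIl _ _) D) //.
- by move=> ->.
- by move=> /negPf ->.
Qed.

Lemma Pcolour_ge0 x y : 0 <= Pcolour ends W Wh x y.
Proof.
rewrite !mulr_ge0 ?ler0n // prodr_ge0 // => C /conn_sub_comps cC.
by rewrite divr_ge0 ?Wcol_ge0 //; case/HW: cC.
Qed.

Lemma Pcolour_gt0 A s t : muw ends W Wh (A, t) != 0 -> 0 < Pcolour ends W Wh (A, s) (A, t).
Proof.
case/muw_neq0P => D W_gt0; rewrite /Pcolour /= eqxx D !mul1r prodr_gt0 // => C CK.
by rewrite divr_gt0 ?Wcol_gt0 ?W_gt0 //; apply: conn_sub_comps CK.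
Qed.

Lemma Pcolour_supp x y : Pcolour ends W Wh x y != 0 -> muw ends W Wh y != 0.
Proof.
case: x y => [A s] [A' t]; rewrite /Pcolour /= !mulf_eq0 !negb_or !pnatr_eq0 !eqb0 !negbK.
case/andP=> /andP[/eqP <- D] /prodf_neq0 Wc; rewrite /muw D /=; apply/prodf_neq0 => C CK.
by have := Wc C CK; rewrite mulf_eq0 negb_or => /andP[].
Qed.

Lemma sum_muw_Pcolour y : \sum_x muw ends W Wh x * Pcolour ends W Wh x y = muw ends W Wh y.
Proof.
case: y => A t; rewrite sum_pair (bigD1 A) //= [X in _ + X]big1 ?addr0; last first.
  move=> A' A'A.
  by apply: big1 => s _; rewrite /Pcolour /= (negPf A'A) !mul0r mulr0.
rewrite /Pcolour /= eqxx mul1r -big_distrl /= sum_colourings_muw /muw /=.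
case: (Delta ends A t); rewrite ?mul0r ?mulr0 // !mul1r -big_split /=.
apply: eq_bigr => C CK; have [W0 | Wn0] := eqVneq (W C.1 C.2) 0; last by rewrite mulrC divfK.
have [_ [Wh0 _]] := HW (conn_sub_comps CK).
by rewrite W0 mul0r /Wcol; case: colour_of; rewrite /= (Wh0 W0) ?W0 ?subrr.
Qed.

Variable Pred : {set V} -> {set Ed} -> {set Ed} -> R.
Hypothesis Pred_stationary : forall A s, mu ends W Wh (A, s) != 0 ->
  let U := reds s in
  stochastic_on (fun a : {set Ed} => a \subset Eind ends U) (Pred U) /\
  stationary_on (fun a : {set Ed} => a \subset Eind ends U) (Pred U) (phi ends U Wh).

Lemma sum_muw_Pbond y : \sum_x muw ends W Wh x * Pbond ends Pred x y = muw ends W Wh y.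
Proof.
case: y => A' s; rewrite sum_pair.
rewrite (eq_bigr (fun A => muw ends W Wh (A, s) * Pbond ends Pred (A, s) (A', s))); last first.
  move=> A _; rewrite (bigD1 s) //= [X in _ + X]big1 ?addr0 // => s' s's.
  by rewrite /Pbond /= (negPf s's) !mul0r mulr0.
set Er := Eind ends (reds s); set Eb := Eind ends (blues s).
have [DA' | nDA'] := boolP (Delta ends A' s); last first.
  rewrite /muw (negPf nDA') mul0r big1 // => A _.
  by rewrite /Pbond /= (negPf nDA') !(mul0r, mulr0).
(* [Pred (reds s)] is only known to be stationary if the colouring [s] is supported. *)
have [A0 hA0 | no_supp] := pickP (fun A : {set Ed} => muw ends W Wh (A, s) != 0); last first.
  rewrite (eqP (negbFE (no_supp A'))) big1 // => A _.
  by rewrite (eqP (negbFE (no_supp A))) mul0r.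
have /= [_ stat] := @Pred_stationary A0 s (etrans (mu_neq0 _) hA0).
transitivity (\sum_(A : {set Ed} | Delta ends A s && (A :&: Eb == A' :&: Eb))
    muw ends W Wh (A, s) * Pred (reds s) (A :&: Er) (A' :&: Er)).
  rewrite [RHS]big_mkcond; apply: eq_bigr => A _; rewrite /Pbond /= eqxx DA' mul1r.
  have [DA | nDA] := boolP (Delta ends A s); last by rewrite /muw (negPf nDA) !mul0r.
  by case: eqP; rewrite ?mul1r ?mul0r ?mulr0.
rewrite sum_fixed_blue_part.
transitivity (\prod_(C in comps ends (blues s) (A' :&: Eb)) (W C.1 C.2 - Wh C.1 C.2) *
    \sum_(X : {set Ed} | X \subset Er) phiw ends (reds s) Wh X * Pred (reds s) X (A' :&: Er)).
  rewrite big_distrr; apply: eq_bigr => X XE.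
  have [eXr eXb DX] := recombine_red_blue A' XE.
  by rewrite (muw_split DX) eXr eXb mulrAC mulrC.
rewrite (stationary_unnormalized (fun B _ => phiw_ge0 (reds s) B) stat) ?subsetIr //.
by rewrite (muw_split DA') mulrC.
Qed.

Lemma Pchain_stationary : stationary_on predT (Pchain ends W Wh Pred) (mu ends W Wh).
Proof.
apply: stationary_scale; apply: stationary_comp => y _.
  exact: sum_muw_Pcolour.
exact: sum_muw_Pbond.
Qed.

Lemma Pbond_all_red A B :
  Pbond ends Pred (A, all_red V) (B, all_red V) = Pred setT A B.
Proof.
rewrite /Pbond /= eqxx Delta_all_red reds_all_red blues_all_red Eind_setT Eind_set0.
by rewrite !setIT !setI0 eqxx !mul1r.
Qed.

Lemma Pcolour_Pbond_ge0 x z y : 0 <= Pcolour ends W Wh x z * Pbond ends Pred z y.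
Proof.
have [-> | /Pcolour_supp hz] := eqVneq (Pcolour ends W Wh x z) 0; first by rewrite mul0r.
rewrite mulr_ge0 ?Pcolour_ge0 //; case: z hz => A t hz.
have /= [[Pred_ge0 _] _] := Pred_stationary (etrans (mu_neq0 _) hz).
by rewrite /Pbond /= !mulr_ge0 ?ler0n // Pred_ge0 ?subsetIr.
Qed.

Lemma Pchain_gt0 A s t y : muw ends W Wh (A, t) != 0 ->
  0 < Pbond ends Pred (A, t) y -> 0 < Pchain ends W Wh Pred (A, s) y.
Proof.
move=> hAt Pb; rewrite /Pchain (bigD1 (A, t)) //=.
apply: ltr_wpDr (mulr_gt0 (Pcolour_gt0 s hAt) Pb).
by rewrite sumr_ge0 // => z _; apply: Pcolour_Pbond_ge0.
Qed.

Lemma phi_setT_neq0 A : (phi ends setT Wh A != 0) = (muw ends W Wh (A, all_red V) != 0).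
Proof. by rewrite phi_neq0 ?Eind_setT ?subsetT // muw_all_red. Qed.

Lemma Pchain_to_all_red A s : muw ends W Wh (A, s) != 0 ->
  exists2 B, muw ends W Wh (B, all_red V) != 0 &
             0 < Pchain ends W Wh Pred (A, s) (B, all_red V).
Proof.
move=> hAs; have hA := muw_neq0_all_red hAs.
have := @Pred_stationary A (all_red V); rewrite mu_neq0 // => /(_ hA).
rewrite /= reds_all_red Eind_setT => -[stoch stat].
have phiA : 0 < phi ends setT Wh A by rewrite lt_def phi_setT_neq0 hA phi_ge0.
have [B /andP[_ phiB] PAB] :=
  stationary_pos_succ stoch stat (fun B _ => phi_ge0 _ B) (subsetT A) phiA.
exists B; first by rewrite -phi_setT_neq0 gt_eqF.
by apply: Pchain_gt0 hA _; rewrite Pbond_all_red.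
Qed.

Lemma Pchain_from_all_red B t : muw ends W Wh (B, t) != 0 ->
  exists2 A, muw ends W Wh (A, all_red V) != 0 &
             0 < Pchain ends W Wh Pred (A, all_red V) (B, t).
Proof.
move=> hBt; have DB : Delta ends B t by case/muw_neq0P: hBt.
have /= [[Pred_ge0 _] stat] := Pred_stationary (etrans (mu_neq0 _) hBt).
set Er := Eind ends (reds t) in Pred_ge0 stat *; set Eb := Eind ends (blues t).
have := hBt; rewrite (muw_split DB) mulf_eq0 negb_or => /andP[phiBr blueB].
have phiBr' : 0 < phi ends (reds t) Wh (B :&: Er).
  by rewrite lt_def phi_neq0 ?subsetIr // phiBr phi_ge0.
have [X /andP[XE phiX] PXB] :=
  stationary_pos_pred Pred_ge0 stat (fun X _ => phi_ge0 _ X) (subsetIr B Er) phiBr'.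
have [eXr eXb DX] := recombine_red_blue B XE.
set A := X :|: B :&: Eb in eXr eXb DX.
have hA : muw ends W Wh (A, t) != 0.
  by rewrite (muw_split DX) eXr eXb mulf_neq0 // -phi_neq0 // gt_eqF.
exists A; first exact: muw_neq0_all_red hA.
apply: Pchain_gt0 hA _.
by rewrite /Pbond /= eqxx DB -/Er -/Eb eXr eXb eqxx !mul1r.
Qed.

Hypothesis Pred_irreducible :
  irreducible_on (fun a : {set Ed} => phi ends setT Wh a != 0) (Pred setT).

Lemma Pchain_irreducible :
  irreducible_on (fun x => mu ends W Wh x != 0) (Pchain ends W Wh Pred).
Proof.
move=> [A s] [B t]; rewrite !mu_neq0 // => hAs hBt.
have [A' hA' PAA'] := Pchain_to_all_red hAs.
have [B' hB' PB'B] := Pchain_from_all_red hBt.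
apply: (connect_trans (y := (A', all_red V))).
  by apply: connect1; rewrite /= !mu_neq0 // hAs hA'.
apply: (connect_trans (y := (B', all_red V))); last first.
  by apply: connect1; rewrite /= !mu_neq0 // hB' hBt.
apply: (homo_connect (f := fun a => (a, all_red V))) (Pred_irreducible _ _);
  rewrite ?phi_setT_neq0 // => a b /and3P[]; rewrite /= !phi_setT_neq0 => ha hb Pab.
by rewrite !mu_neq0 // ha hb; apply: Pchain_gt0 ha _; rewrite Pbond_all_red.
Qed.

End Chain.

Unset Implicit Arguments.
Theorem proposition3 (R : realFieldType) (V Ed : finType) (ends : Ed -> V * V)
  (W Wh : {set V} -> {set Ed} -> R)
  (Pred : {set V} -> {set Ed} -> {set Ed} -> R) :
  (forall S B, conn_sub ends S B ->
     0 <= W S B /\ (W S B = 0 -> Wh S B = 0) /\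
     (0 < W S B -> 0 < Wh S B /\ Wh S B < W S B)) ->
  (forall A s, mu ends W Wh (A, s) != 0 ->
     let U := reds s in
     stochastic_on (fun a : {set Ed} => a \subset Eind ends U) (Pred U) /\
     stationary_on (fun a : {set Ed} => a \subset Eind ends U) (Pred U) (phi ends U Wh)) ->
  irreducible_on (fun a : {set Ed} => phi ends setT Wh a != 0) (Pred setT) ->
  irreducible_on (fun x : state V Ed => mu ends W Wh x != 0) (Pchain ends W Wh Pred) /\
  stationary_on (fun x : state V Ed => true) (Pchain ends W Wh Pred) (mu ends W Wh).
Proof.
move=> HW Pred_stationary Pred_irreducible.
by split; [apply: Pchain_irreducible | apply: Pchain_stationary].
Qed.
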